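(* For every positive integer $n$, $$\sum_{k=1}^{n}N^p_{bin}(k)\,s(n-k)=\vartheta_2(n)+1,$$ where $s(0)=1$ and $s(m)=(-1)^{h(m)}$ for $m\ge1$.
   Context: A binary partition of $m$ is a partition of $m$ all of whose parts are powers of $2$ (including $2^0=1$). $N^p_{bin}(m)$ is the total number of parts, summed over all binary partitions of $m$. $h(m)$ is the number of ones in the binary representation of $m$. $\vartheta_2(n)$ is the $2$-adic valuation of $n$. *)

From mathcomp Require Import all_boot all_order all_algebra.
Set Implicit Arguments. Unset Strict Implicit. Unset Printing Implicit Defensive.
Import Order.TTheory GRing.Theory Num.Theory.

(* A binary partition of m is represented by its multiplicity function
   c : exponent i |-> number of parts equal to 2^i.  Every part 2^i of a
   partition of m satisfies i <= m and every multiplicity is <= m, so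
   c : {ffun 'I_m.+1 -> 'I_m.+1} with \sum_i c i * 2^i = m enumerates the
   binary partitions of m bijectively. *)
Definition is_bin_partition (m : nat) (c : {ffun 'I_m.+1 -> 'I_m.+1}) : bool :=
  (\sum_(i < m.+1) (c i : nat) * 2 ^ i)%N == m.

Definition num_parts (m : nat) (c : {ffun 'I_m.+1 -> 'I_m.+1}) : nat :=
  (\sum_(i < m.+1) (c i : nat))%N.

Definition Npbin (m : nat) : nat :=
  (\sum_(c : {ffun 'I_m.+1 -> 'I_m.+1} | is_bin_partition c) num_parts c)%N.

(* h(m): number of ones in the binary representation of m
   (bit i of m is odd (m %/ 2^i); bits with i > m vanish since m < 2^m) *)
Definition hbin (m : nat) : nat := (\sum_(i < m.+1) odd (m %/ 2 ^ i))%N.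

Definition sfun (m : nat) : int := if m == 0%N then 1%R else ((-1) ^+ hbin m)%R.

From mathcomp Require Import all_boot all_order all_algebra.
From mathcomp Require Import ring.
Set Implicit Arguments. Unset Strict Implicit. Unset Printing Implicit Defensive.
Import GRing.Theory.
Local Open Scope ring_scope.

(* With the Thue-Morse product
     T(x) = \prod_i (1 - x^(2^i)) = \sum_m s(m) x^m
   and the series of the N^p_bin,
     P(x) = \sum_i0 (\sum_j j x^(2^i0 j)) \prod_(i <> i0) 1 / (1 - x^(2^i))
   (the factor i0 counts the parts equal to 2^i0), one gets
     P(x) T(x) = \sum_i x^(2^i) / (1 - x^(2^i)),
   whose k-th coefficient is the number of i with 2^i | k, i.e. v_2(k) + 1.
   Everything is done with polynomials truncated at a finite order: exponents
   below L and multiplicities below B give a polynomial P_(L,B) agreeing with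
   P below order min(L, B), which follows from cancelling T (T(0) = 1). *)

Section TakePoly.

Variable R : nzRingType.
Implicit Types (p q s : {poly R}) (K : nat).

Lemma take_polyP K p q :
  (forall k, (k < K)%N -> p`_k = q`_k) <-> take_poly K p = take_poly K q.
Proof.
split=> [pq | /polyP pq k ltkK].
  by apply/polyP => k; rewrite !coef_take_poly; case: ifP => // /pq.
by have := pq k; rewrite !coef_take_poly ltkK.
Qed.

Lemma take_poly_take_poly K K' p :
  (K' <= K)%N -> take_poly K' (take_poly K p) = take_poly K' p.
Proof.
move=> leK'K; apply/take_polyP => k ltkK'.
by rewrite coef_take_poly (leq_trans ltkK').
Qed.

Lemma take_polyM K p q :
  take_poly K (p * q) = take_poly K (take_poly K p * take_poly K q).
Proof.
apply/take_polyP => k ltkK; rewrite !coefM; apply: eq_bigr => j _.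
rewrite !coef_take_poly (leq_ltn_trans (leq_subr j k) ltkK).
by rewrite (leq_ltn_trans _ ltkK) // -ltnS.
Qed.

Lemma take_poly_prod K (I : finType) (P : pred I) (F : I -> {poly R}) :
  take_poly K (\prod_(i | P i) F i) = take_poly K (\prod_(i | P i) take_poly K (F i)).
Proof.
elim/big_rec2: _ => [|i y1 y2 _ IH] //.
by rewrite take_polyM IH [RHS]take_polyM take_poly_take_poly.
Qed.

(* The coefficients of [p] are determined one by one from [p * s], because [s`_0 = 1]. *)
Lemma take_poly_mul_cancel K p p' s s' : s`_0 = 1 ->
  take_poly K s = take_poly K s' -> take_poly K (p * s) = take_poly K (p' * s') ->
  take_poly K p = take_poly K p'.
Proof.
move=> s0; elim: K => [|K IH] /take_polyP ss' /take_polyP ps.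
  by rewrite !take_poly0l.
have /take_polyP pp' : take_poly K p = take_poly K p'.
  by apply: IH; apply/take_polyP => k ltkK; [apply: ss' | apply: ps]; apply: ltnW.
apply/take_polyP => k; rewrite ltnS leq_eqVlt => /predU1P[->|]; last exact: pp'.
have := ps K (ltnSn K); rewrite !coefM !big_ord_recr /= subnn -ss' // s0 !mulr1.
rewrite (eq_bigr (fun i : 'I_K => p'`_i * s'`_(K - i))) => [/addrI // | i _].
by rewrite pp' // ss' // ltnS leq_subr.
Qed.

End TakePoly.

Section GeometricSums.

Variable R : comNzRingType.

Lemma sum_expr_mul1B (y : R) B : (\sum_(j < B) y ^+ j) * (1 - y) = 1 - y ^+ B.
Proof. by rewrite mulrC -opprB mulNr -subrX1 opprB. Qed.

Lemma sum_exprMn_mul1B (y : R) B :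
  (\sum_(j < B) y ^+ j *+ j) * (1 - y) = \sum_(j < B) y ^+ j.+1 - y ^+ B *+ B.
Proof.
elim: B => [|B IH]; first by rewrite !big_ord0 mul0r subr0.
rewrite !big_ord_recr /= mulrDl IH !mulrSr !exprS; ring.
Qed.

End GeometricSums.

Lemma sum_bits_widen K K' m : (m < 2 ^ K)%N -> (K <= K')%N ->
  (\sum_(i < K') odd (m %/ 2 ^ i) = \sum_(i < K) odd (m %/ 2 ^ i))%N.
Proof.
move=> ltm leKK'.
rewrite (big_ord_widen K' (fun i => odd (m %/ 2 ^ i) : nat) leKK') [RHS]big_mkcond /=.
apply: eq_bigr => i _; case: ltnP => // leKi.
by rewrite divn_small // (leq_trans ltm) // leq_exp2l.
Qed.

Lemma hbinE K m : (m < 2 ^ K)%N -> hbin m = (\sum_(i < K) odd (m %/ 2 ^ i))%N.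
Proof.
have ltm : (m < 2 ^ m.+1)%N by rewrite (ltn_trans (ltn_expl m (ltnSn 1))) ?ltn_exp2l.
move=> ltmK; rewrite /hbin -(sum_bits_widen ltm (leq_maxr K m.+1)).
exact: sum_bits_widen ltmK (leq_maxl K m.+1).
Qed.

Lemma hbin0 : hbin 0 = 0%N.
Proof. by rewrite /hbin big_ord1. Qed.

Lemma hbinD_exp2 L m : (m < 2 ^ L)%N -> hbin (m + 2 ^ L) = (hbin m).+1.
Proof.
move=> ltm; rewrite (hbinE ltm) (@hbinE L.+1) ?expnS ?mul2n -?addnn ?ltn_add2r //.
rewrite big_ord_recr /= divnDr ?dvdnn // divn_small // divnn expn_gt0 /= addn1.
congr (_.+1); apply: eq_bigr => i _.
have le_iL : (i <= L)%N := ltnW (ltn_ord i).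
by rewrite divnDr ?dvdn_exp2l // -(expnB _ le_iL) // oddD oddX subn_eq0 leqNgt ltn_ord /= addbF.
Qed.

Section ThueMorse.

Variable R : nzRingType.

Definition thue_morse_poly L : {poly R} := \prod_(i < L) (1 - 'X^(2 ^ i)).

Lemma coef_thue_morse_poly L m :
  (thue_morse_poly L)`_m = if (m < 2 ^ L)%N then (-1) ^+ hbin m else 0.
Proof.
elim: L m => [|L IH] m.
  by rewrite /thue_morse_poly big_ord0 coefC expn0; case: m => [|m] //; rewrite hbin0.
rewrite /thue_morse_poly big_ord_recr /= mulrBr mulr1 coefB coefMXn !IH.
have [ltm | lem] := ltnP m (2 ^ L).
  by rewrite (leq_trans ltm) ?leq_exp2l // subr0.
rewrite sub0r expnS mul2n -addnn.
have [ltm2 | lem2] := ltnP m (2 ^ L + 2 ^ L); last first.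
  by rewrite ltnNge leq_subRL // lem2 oppr0.
have ltmL : (m - 2 ^ L < 2 ^ L)%N by rewrite ltn_subLR.
by rewrite ltmL -{2}(subnK lem) hbinD_exp2 // exprS mulN1r.
Qed.

End ThueMorse.

Lemma sum_ord_eq B x : (\sum_(j < B) (j == x :> nat) = (x < B))%N.
Proof. by rewrite -big_mkcond (big_ord1_eq _ (fun=> 1%N)). Qed.

Lemma sum_ord_leq L v : (v < L)%N -> (\sum_(i < L) (i <= v) = v.+1)%N.
Proof.
by move=> ltvL; rewrite -big_mkcond /= -(big_ord_widen _ (fun=> 1%N) ltvL) sum1_card card_ord.
Qed.

Lemma sum_ord_eq_mulS a k B : (0 < a)%N -> (0 < k < B)%N ->
  (\sum_(j < B) (k == a * j.+1) = (a %| k))%N.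
Proof.
move=> a_gt0 /andP[k_gt0 ltkB]; have [[q def_k] | ndvd] := altP dvdnP; last first.
  apply: big1 => j _; apply/eqP; rewrite eqb0.
  by apply: contra ndvd => /eqP ->; apply: dvdn_mulr.
have q_gt0 : (0 < q)%N by move: k_gt0; rewrite def_k muln_gt0 => /andP[].
have ltqB : (q.-1 < B)%N.
  by rewrite (leq_trans _ ltkB) // ltnS (leq_trans (leq_pred q)) // def_k leq_pmulr.
transitivity (\sum_(j < B) (j == q.-1 :> nat))%N; last by rewrite sum_ord_eq ltqB.
apply: eq_bigr => j _.
by rewrite def_k mulnC eqn_pmul2l // -[q in q == _](prednK q_gt0) eqSS eq_sym.
Qed.

Section BinaryPartitionSeries.

Variable R : comNzRingType.
Implicit Types (L B K : nat) (p : {poly R}).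

Definition bin_parts_poly L B : {poly R} :=
  \sum_(c : {ffun 'I_L -> 'I_B}) 'X^(\sum_(i < L) c i * 2 ^ i)%N *+ (\sum_(i < L) c i)%N.

Definition pow2_divisors_poly L B : {poly R} :=
  \sum_(i < L) \sum_(j < B) 'X^(2 ^ i) ^+ j.+1.

Lemma coef_bin_parts_poly L B k :
  (bin_parts_poly L B)`_k =
  (\sum_(c : {ffun 'I_L -> 'I_B} | \sum_(i < L) c i * 2 ^ i == k) \sum_(i < L) c i)%N%:R.
Proof.
rewrite coef_sum natr_sum [RHS]big_mkcond /=; apply: eq_bigr => c _.
by rewrite coefMn coefXn eq_sym; case: eqP => _; rewrite ?mul0rn.
Qed.

(* Marking the factor [i0] with the weight [j] counts the parts equal to [2 ^ i0]. *)
Lemma bin_parts_polyE L B :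
  bin_parts_poly L B =
  \sum_(i0 < L) \prod_(i < L) \sum_(j < B) 'X^(2 ^ i) ^+ j *+ (if i == i0 then j : nat else 1%N).
Proof.
under [RHS]eq_bigr do rewrite bigA_distr_bigA.
rewrite exchange_big /=; apply: eq_bigr => c _.
under eq_bigr do rewrite prodrMn.
rewrite sumrMnr -prodrXr; congr (_ *+ _).
  by apply: eq_bigr => i _; rewrite mulnC exprM.
by apply: eq_bigr => i0 _; rewrite -big_mkcond big_pred1_eq.
Qed.

Lemma take_poly_subX2expMn i B m p : take_poly B (p - 'X^(2 ^ i) ^+ B *+ m) = take_poly B p.
Proof.
apply/take_polyP => k ltkB; rewrite coefB coefMn -exprM coefXn ltn_eqF ?mul0rn ?subr0 //.
by rewrite (leq_trans ltkB) // leq_pmull // expn_gt0.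
Qed.

Lemma bin_parts_poly_mul_thue_morse L B :
  take_poly B (bin_parts_poly L B * thue_morse_poly R L) = take_poly B (pow2_divisors_poly L B).
Proof.
rewrite bin_parts_polyE /pow2_divisors_poly mulr_suml !take_poly_sum.
apply: eq_bigr => i0 _; rewrite /thue_morse_poly -big_split /=.
have -> : \sum_(j < B) 'X^(2 ^ i0) ^+ j.+1 =
          \prod_(i < L) (if i == i0 then \sum_(j < B) 'X^(2 ^ i) ^+ j.+1 else 1) :> {poly R}.
  by rewrite -big_mkcond big_pred1_eq.
rewrite take_poly_prod [RHS]take_poly_prod; congr (take_poly _ _).
apply: eq_bigr => i _; case: eqP => _ /=.
  by rewrite sum_exprMn_mul1B take_poly_subX2expMn.
under eq_bigr do rewrite mulr1n.
by rewrite sum_expr_mul1B -[_ ^+ B]mulr1n take_poly_subX2expMn.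
Qed.

Lemma coef_pow2_divisors_poly0 L B : (pow2_divisors_poly L B)`_0 = 0.
Proof.
rewrite coef_sum big1 // => i _; rewrite coef_sum big1 // => j _.
by rewrite -exprM coefXn eq_sym muln_eq0 expn_eq0 /=.
Qed.

Lemma coef_pow2_divisors_poly L B k : (0 < k < B)%N -> (k < L)%N ->
  (pow2_divisors_poly L B)`_k = (logn 2 k).+1%:R.
Proof.
move=> /[dup] /andP[k_gt0 _] kB ltkL.
have ltlogL : (logn 2 k < L)%N.
  rewrite (leq_trans _ ltkL) // (leq_trans (ltn_expl _ (ltnSn 1))) //.
  by apply/leqW/dvdn_leq; rewrite // pfactor_dvdnn.
rewrite -(sum_ord_leq ltlogL) natr_sum coef_sum; apply: eq_bigr => i _.
rewrite -pfactor_dvdn // -(@sum_ord_eq_mulS _ _ B) ?expn_gt0 // natr_sum coef_sum.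
by apply: eq_bigr => j _; rewrite -exprM coefXn.
Qed.

(* Both products with [thue_morse_poly] agree with [pow2_divisors_poly] up to order [K],
   and [thue_morse_poly] can be cancelled since its constant coefficient is [1]. *)
Lemma bin_parts_poly_take K L L' B B' :
  (K <= L)%N -> (K <= L')%N -> (K <= B)%N -> (K <= B')%N ->
  take_poly K (bin_parts_poly L B) = take_poly K (bin_parts_poly L' B').
Proof.
move=> leKL leKL' leKB leKB'.
have ltK2 M : (K <= M)%N -> (K < 2 ^ M)%N by move/leq_ltn_trans; apply; apply: ltn_expl.
apply: (@take_poly_mul_cancel _ _ _ _ (thue_morse_poly R L) (thue_morse_poly R L')).
- by rewrite coef_thue_morse_poly expn_gt0 hbin0.
- apply/take_polyP => k ltkK; rewrite !coef_thue_morse_poly.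
  by rewrite !(ltn_trans ltkK) ?ltK2.
rewrite -(take_poly_take_poly _ leKB) bin_parts_poly_mul_thue_morse take_poly_take_poly //.
rewrite -[RHS](take_poly_take_poly _ leKB') bin_parts_poly_mul_thue_morse.
rewrite take_poly_take_poly //; apply/take_polyP => -[|k] ltkK.
  by rewrite !coef_pow2_divisors_poly0.
by rewrite !coef_pow2_divisors_poly // (leq_trans ltkK).
Qed.

End BinaryPartitionSeries.

Lemma Npbin0 : Npbin 0 = 0%N.
Proof.
by apply: big1 => c _; rewrite /num_parts big_ord1; case: (c ord0) => -[].
Qed.

Lemma Npbin_coef n k : (k <= n)%N -> (Npbin k)%:Z = (bin_parts_poly int n.+1 n.+1)`_k.
Proof.
move=> lekn.
have /take_polyP <- // : take_poly k.+1 (bin_parts_poly int k.+1 k.+1) =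
                         take_poly k.+1 (bin_parts_poly int n.+1 n.+1).
  by apply: bin_parts_poly_take; rewrite ?ltnS.
by rewrite coef_bin_parts_poly natz.
Qed.

Lemma sfunE m : sfun m = (-1) ^+ hbin m.
Proof. by rewrite /sfun; case: eqP => // ->; rewrite hbin0. Qed.

Theorem corollary8 (n : nat) (hn : (0 < n)%N) :
  \sum_(1 <= k < n.+1) (Npbin k)%:Z * sfun (n - k) = (logn 2 n)%:Z + 1.
Proof.
have -> : (logn 2 n)%:Z + 1 = (bin_parts_poly int n.+1 n.+1 * thue_morse_poly int n.+1)`_n.
  have /take_polyP -> // := bin_parts_poly_mul_thue_morse int n.+1 n.+1.
  by rewrite coef_pow2_divisors_poly ?hn ?ltnSn // -natz natr1.
rewrite coefM big_ord_recl -Npbin_coef // Npbin0 mul0r add0r big_add1 /= big_mkord.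
apply: eq_bigr => k _; rewrite /bump /= add1n (Npbin_coef (n := n)) // sfunE.
by rewrite coef_thue_morse_poly (leq_ltn_trans (leq_subr _ n)) // ltnW // ltn_expl.
Qed.
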